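(* Let $\Gamma$ be a $(c,t)$-sparse graph and let $0<\gamma<1$. Suppose $\pi_1$ and $\pi_2$ are probability measures on $V(\Gamma)$ such that $\pi_i(v)<\gamma/t$ for all $v\in V(\Gamma)$ and $i\in\{1,2\}$. Let $\mathcal{S}=\{S_v: v\in\mathrm{supp}(\pi_2)\}$ be a family of subsets of $V(\Gamma)$, each of size $|S_v|\ge t$. Let $$D(\pi_2,\mathcal{S})=\{x\in V(\Gamma): \pi_2(\{y\in V(\Gamma): |S_y\setminus N_\Gamma(x)|<c|S_y|\})<\sqrt{\gamma}\}.$$ Then $\Pr_{x\sim\pi_1}[x\in D(\pi_2,\mathcal{S})]>1-\sqrt{\gamma}$.
   Context: A graph $\Gamma$ is $(c,t)$-sparse if for every pair of (not necessarily disjoint) vertex subsets $A,B\subseteq V(\Gamma)$ with $|A|,|B|\ge t$ we have $e(A,B)\le (1-c)|A||B|$, where $e(A,B)$ counts ordered pairs $(a,b)\in A\times B$ with $\{a,b\}\in E(\Gamma)$. *)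

From mathcomp Require Import all_boot all_order all_algebra.
Set Implicit Arguments. Unset Strict Implicit. Unset Printing Implicit Defensive.
Import Order.TTheory GRing.Theory Num.Theory.
Local Open Scope ring_scope.

Definition simple_graph (T : finType) (g : rel T) : Prop :=
  (forall x, ~~ g x x) /\ (forall x y, g x y = g y x).

Definition nbhd (T : finType) (g : rel T) (x : T) : {set T} := [set y | g x y].

Definition edges_between (T : finType) (g : rel T) (A B : {set T}) : nat :=
  #|[set p in setX A B | g p.1 p.2]|.

Definition sparse (R : realFieldType) (T : finType) (g : rel T) (c t : R) : Prop :=
  forall A B : {set T}, t <= #|A|%:R -> t <= #|B|%:R ->
    (edges_between g A B)%:R <= (1 - c) * #|A|%:R * #|B|%:R.

Definition prob_measure (R : realFieldType) (T : finType) (pi : T -> R) : Prop :=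
  (forall v, 0 <= pi v) /\ \sum_(v : T) pi v = 1.

Definition measure_of (R : realFieldType) (T : finType) (pi : T -> R) (A : {set T}) : R :=
  \sum_(v in A) pi v.

Definition supp (R : realFieldType) (T : finType) (pi : T -> R) : {set T} :=
  [set v | 0 < pi v].

Definition Dset (R : rcfType) (T : finType) (g : rel T) (c gamma : R)
    (pi2 : T -> R) (S : T -> {set T}) : {set T} :=
  [set x | measure_of pi2
             [set y | #|S y :\: nbhd g x|%:R < c * #|S y|%:R] < Num.sqrt gamma].

From mathcomp Require Import all_boot all_order all_algebra.
From mathcomp Require Import lra.
Set Implicit Arguments. Unset Strict Implicit. Unset Printing Implicit Defensive.
Import Order.TTheory GRing.Theory Num.Theory.
Local Open Scope ring_scope.

(* Suppose D has pi1-measure at most 1 - sqrt gamma.  Every x outside D sees a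
   pi2-mass at least sqrt gamma of vertices y whose set S_y it nearly covers,
   so averaging over y in supp pi2 yields one y for which the set A_y of such x
   has pi1-measure at least gamma.  As pi1 puts mass below gamma / t on each
   vertex, |A_y| >= t; but every x in A_y is adjacent to more than a (1 - c)
   fraction of S_y, so e(A_y, S_y) > (1 - c) |A_y| |S_y|, against sparseness. *)

Lemma measure_setC (R : realFieldType) (T : finType) (pi : T -> R) (A : {set T}) :
  prob_measure pi -> measure_of pi (~: A) = 1 - measure_of pi A.
Proof.
case=> _ pi1; rewrite /measure_of -pi1 [in RHS](bigID (mem A)) /= addrAC subrr add0r.
by apply: eq_bigl => v; rewrite inE.
Qed.

Lemma prob_mean_ge_witness (R : realFieldType) (T : finType) (pi f : T -> R) (a : R) :
  prob_measure pi -> a <= \sum_v pi v * f v -> exists2 v, 0 < pi v & a <= f v.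
Proof.
case=> pi_ge0 pi1 a_le; apply/exists_inP; apply: contraLR a_le.
move=> /exists_inPn f_lt; rewrite -ltNge.
rewrite -[a]mul1r -pi1 big_distrl /=.
rewrite [X in X < _](bigID (fun v => 0 < pi v)) [X in _ < X](bigID (fun v => 0 < pi v)) /=.
have pi_eq0 v : ~~ (0 < pi v) -> pi v = 0.
  by move=> pi_le0; apply/eqP; rewrite eq_le pi_ge0 andbT leNgt.
rewrite [X in _ + X < _]big1 => [|v /pi_eq0 ->]; last by rewrite mul0r.
rewrite [X in _ < _ + X]big1 => [|v /pi_eq0 ->]; last by rewrite mul0r.
have [v0 pv0] : exists v0, 0 < pi v0.
  apply/existsP; apply: contraTT (oner_neq0 R) => /existsPn pi_le0.
  by rewrite -pi1 big1 ?eqxx // => v _; apply: pi_eq0.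
rewrite !addr0; apply: ltr_sum => [|v pi_gt0]; last by rewrite ltr_pM2l // ltNge f_lt.
by apply/hasP; exists v0; rewrite ?mem_index_enum.
Qed.

Lemma sum_measure_exchange (R : realFieldType) (T : finType) (p q : T -> R)
    (B : {set T}) (Y : T -> {set T}) :
  \sum_(x in B) p x * measure_of q (Y x) =
  \sum_y q y * measure_of p [set x in B | y \in Y x].
Proof.
rewrite /measure_of; under eq_bigr do rewrite big_distrr.
rewrite (exchange_big_dep predT) //=; apply: eq_bigr => y _.
rewrite big_distrr /=; apply: eq_big => [x|x _]; first by rewrite !inE.
exact: mulrC.
Qed.

Lemma card_ge_of_measure_ge (R : realFieldType) (T : finType) (pi : T -> R)
    (a t : R) (A : {set T}) :
  0 < a -> 0 < t -> (forall v, pi v < a / t) -> a <= measure_of pi A ->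
  t <= #|A|%:R.
Proof.
move=> a_gt0 t_gt0 pi_lt a_le.
have : measure_of pi A <= #|A|%:R * (a / t).
  by rewrite mulr_natl -sumr_const; apply: ler_sum => v _; apply: ltW.
by move=> /(le_trans a_le); rewrite mulrA ler_pdivlMr // mulrC ler_pM2r.
Qed.

Lemma edges_between_sum_nbhd (T : finType) (g : rel T) (A B : {set T}) :
  edges_between g A B = (\sum_(x in A) #|B :&: nbhd g x|)%N.
Proof.
rewrite /edges_between -sum1_card; under [RHS]eq_bigr do rewrite -sum1_card.
by rewrite pair_big_dep /=; apply: eq_bigl => -[x y]; rewrite !inE andbA.
Qed.

Lemma sparse_exists_nonneighbours (R : realFieldType) (T : finType) (g : rel T)
    (c t : R) (A B : {set T}) :
  sparse g c t -> 0 < t -> t <= #|A|%:R -> t <= #|B|%:R ->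
  exists2 x, x \in A & c * #|B|%:R <= #|B :\: nbhd g x|%:R.
Proof.
move=> g_sparse t_gt0 tA tB; apply/exists_inP; apply: contraLR (g_sparse A B tA tB).
move=> /exists_inPn few_nonnbrs; rewrite -ltNge.
have [x0 x0A] : exists x0, x0 \in A.
  by apply/set0Pn; rewrite -card_gt0 -(ltr0n R); apply: lt_le_trans tA.
rewrite edges_between_sum_nbhd natr_sum mulrAC mulr_natr -sumr_const.
apply: ltr_sum => [|x xA]; first by apply/hasP; exists x0; rewrite ?mem_index_enum.
have := few_nonnbrs x xA; rewrite -ltNge.
have /(congr1 (fun n => n%:R : R)) := cardsID (nbhd g x) B; rewrite natrD.
lra.
Qed.

Theorem lemma4p2 (R : rcfType) (T : finType) (g : rel T) (c t gamma : R)
    (pi1 pi2 : T -> R) (S : T -> {set T}) :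
  simple_graph g ->
  sparse g c t ->
  0 < gamma -> gamma < 1 ->
  prob_measure pi1 -> prob_measure pi2 ->
  (forall v, pi1 v < gamma / t) ->
  (forall v, pi2 v < gamma / t) ->
  (forall v, v \in supp pi2 -> t <= #|S v|%:R) ->
  measure_of pi1 (Dset g c gamma pi2 S) > 1 - Num.sqrt gamma.
Proof.
move=> _ g_sparse gamma_gt0 _ pi1_prob pi2_prob pi1_lt _ S_large.
rewrite ltNge; apply/negP => D_small.
set D := Dset g c gamma pi2 S.
set Y := fun x => [set y | #|S y :\: nbhd g x|%:R < c * #|S y|%:R].
have gamma_le : gamma <= \sum_y pi2 y * measure_of pi1 [set x in ~: D | y \in Y x].
  have sqrt_le : Num.sqrt gamma <= measure_of pi1 (~: D).
    by rewrite measure_setC //; lra.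
  rewrite -sum_measure_exchange -[gamma](sqr_sqrtr (ltW gamma_gt0)) expr2.
  apply: le_trans (ler_wpM2r (sqrtr_ge0 _) sqrt_le) _.
  rewrite /measure_of big_distrl /=; apply: ler_sum => x.
  rewrite !inE -leNgt => /ler_wpM2l; apply; exact: pi1_prob.1.
have [y pi2y_gt0 A_heavy] := prob_mean_ge_witness pi2_prob gamma_le.
have t_gt0 : 0 < t.
  have := le_lt_trans (pi1_prob.1 y) (pi1_lt y).
  by rewrite pmulr_rgt0 // invr_gt0.
have S_y_large : t <= #|S y|%:R by apply: S_large; rewrite inE.
have [x] := sparse_exists_nonneighbours g_sparse t_gt0
  (card_ge_of_measure_ge gamma_gt0 t_gt0 pi1_lt A_heavy) S_y_large.
by rewrite !inE => /andP[_]; rewrite ltNge => /negP.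
Qed.
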